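(* Let $f\in C^1[0,1]$ with $f(0)=0$, $h:=f'$, $q$ satisfying (q), and assume that $q$ is (left-)differentiable at $1$ with $\dot q(1)\in(-\infty,0]$. Let $c\ge c^*$ and let $z$ be a solution of $(P_c)$. Then the left derivative $\dot z(1)=\lim_{\varphi\to1^-}\frac{z(\varphi)-z(1)}{\varphi-1}$ exists, and: (i) if $z(1)<0$, then $\dot z(1)=h(1)-c$; (ii) if $z(1)=0$, then $\dot z(1)=\frac12\big[h(1)-c+\sqrt{(h(1)-c)^2-4\dot q(1)}\big]$ when $\dot q(1)<0$, and $\dot z(1)=\max\{0,h(1)-c\}$ when $\dot q(1)=0$.
   Context: Condition (q): $q\in C[0,1]$, $q>0$ on $(0,1)$, $q(0)=q(1)=0$, and $\limsup_{\varphi\to0^+}q(\varphi)/\varphi<+\infty$. For $c\in\mathbb R$, a solution of problem $(P_c)$ is a function $z\in C[0,1]\cap C^1(0,1)$ with $\dot z(\varphi)=h(\varphi)-c-q(\varphi)/z(\varphi)$ and $z(\varphi)<0$ for all $\varphi\in(0,1)$, and $z(0)=0$. $c^*$ denotes the real number such that $(P_c)$ has a solution with $z(1)=0$ iff $c\ge c^*$. *)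

From Stdlib Require Import Reals.
From Coquelicot Require Import Coquelicot.
Open Scope R_scope.

Definition I01 (x : R) : Prop := 0 <= x <= 1.

Definition cont01 (g : R -> R) : Prop :=
  forall x, I01 x -> filterlim g (within I01 (locally x)) (locally (g x)).

Definition C1_01 (f h : R -> R) : Prop :=
  (forall x, 0 < x < 1 -> is_derive f x (h x)) /\
  filterlim (fun y => (f y - f 0) / (y - 0)) (at_right 0) (locally (h 0)) /\
  filterlim (fun y => (f y - f 1) / (y - 1)) (at_left 1) (locally (h 1)) /\
  cont01 h.

Definition cond_q (q : R -> R) : Prop :=
  cont01 q /\
  (forall x, 0 < x < 1 -> 0 < q x) /\
  q 0 = 0 /\ q 1 = 0 /\
  (* limsup_{phi -> 0+} q(phi)/phi < +oo *)
  (exists M delta, 0 < delta /\ forall x, 0 < x < delta -> q x / x <= M).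

(* z is a solution of (P_c): z in C[0,1] /\ C^1(0,1), with
   z' = h - c - q/z and z < 0 on (0,1), and z(0) = 0.
   (The derivative equals a function continuous on (0,1), so C^1(0,1)
   is encoded by the pointwise derivative condition.) *)
Definition solP (h q : R -> R) (c : R) (z : R -> R) : Prop :=
  cont01 z /\
  (forall x, 0 < x < 1 -> is_derive z x (h x - c - q x / z x)) /\
  (forall x, 0 < x < 1 -> z x < 0) /\
  z 0 = 0.

From Stdlib Require Import Reals Lra Psatz.
From Coquelicot Require Import Coquelicot.
Open Scope R_scope.

(* The tool is a barrier (comparison) argument for one-sided slopes: if,
   near b, the graph of y below the line of slope L + d through (b, y(b))
   forces y' < L + d, and the graph above the line of slope L - d forces
   y' > L - d, then the left difference quotient of y at b tends to L
   (slope_limit_by_barriers).  It rests on an elementary lemma: a function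
   whose derivative is positive wherever it is positive, and which tends to 0
   at b, is nonpositive (barrier_nonpos).

   If z(1) < 0 then z' -> h(1) - c, and the barriers hold trivially.  If
   z(1) = 0, write s = -z and q(phi) ~ -q'(1)(1 - phi): along a line
   s = D (1 - phi) the slope field equals a + q/s ~ a0 - q'(1)/D, so lines
   with D^2 - a0 D + q'(1) > 0 (resp. < 0) are upper (resp. lower) barriers;
   the root l = (a0 + sqrt(a0^2 - 4 q'(1)))/2 of this quadratic is the slope. *)


Definition near_left (b : R) (P : R -> Prop) : Prop :=
  exists eta, 0 < eta /\ forall x, b - eta < x < b -> P x.

Definition tends_left (b : R) (g : R -> R) (L : R) : Prop :=
  forall eps, 0 < eps -> near_left b (fun x => Rabs (g x - L) < eps).

Lemma near_left_and (b : R) (P Q : R -> Prop) :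
  near_left b P -> near_left b Q -> near_left b (fun x => P x /\ Q x).
Proof.
  intros [e1 [He1 HP]] [e2 [He2 HQ]].
  exists (Rmin e1 e2); split; [now apply Rmin_pos|].
  intros x Hx; pose proof (Rmin_l e1 e2); pose proof (Rmin_r e1 e2).
  split; [apply HP | apply HQ]; lra.
Qed.

Lemma near_left_impl (b : R) (P Q : R -> Prop) :
  near_left b P -> (forall x, x < b -> P x -> Q x) -> near_left b Q.
Proof.
  intros [e [He HP]] HPQ; exists e; split; [exact He|].
  intros x Hx; apply HPQ; [lra | now apply HP].
Qed.

Lemma ball_R (x e y : R) : ball x e y <-> Rabs (y - x) < e.
Proof. reflexivity. Qed.

Lemma tends_left_of_filterlim (b : R) (g : R -> R) (L : R) :
  filterlim g (at_left b) (locally L) -> tends_left b g L.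
Proof.
  intros Hg eps Heps.
  destruct (proj1 (filterlim_locally g L) Hg (mkposreal eps Heps)) as [d Hd].
  exists d; split; [apply cond_pos|]; intros x Hx.
  apply (Hd x); [apply ball_R; simpl; rewrite Rabs_left | ]; lra.
Qed.

Lemma filterlim_of_tends_left (b : R) (g : R -> R) (L : R) :
  tends_left b g L -> filterlim g (at_left b) (locally L).
Proof.
  intros Hg; apply filterlim_locally; intros [eps Heps].
  destruct (Hg eps Heps) as [d [Hd Hclose]].
  exists (mkposreal d Hd); intros y Hy Hyb.
  change (Rabs (y - b) < d) in Hy; apply Rabs_def2 in Hy.
  apply ball_R, Hclose; lra.
Qed.

Lemma tends_left_of_cont01 (g : R -> R) : cont01 g -> tends_left 1 g (g 1).
Proof.
  intros Hg eps Heps.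
  assert (H1 : I01 1) by (unfold I01; lra).
  destruct (proj1 (filterlim_locally g (g 1)) (Hg 1 H1) (mkposreal eps Heps)) as [d Hd].
  exists (Rmin d 1); split; [apply Rmin_pos; [apply cond_pos | lra]|].
  intros x Hx; pose proof (Rmin_l d 1); pose proof (Rmin_r d 1).
  apply (Hd x); [apply ball_R; simpl; rewrite Rabs_left | unfold I01]; lra.
Qed.

Lemma tends_left_linear (b A : R) : tends_left b (fun x => A * (x - b)) 0.
Proof.
  intros eps Heps; exists (eps / (Rabs A + 1)).
  pose proof (Rabs_pos A).
  split; [apply Rdiv_lt_0_compat; lra|]; intros x Hx.
  assert (E : eps / (Rabs A + 1) * (Rabs A + 1) = eps) by (field; lra).
  rewrite Rminus_0_r, Rabs_mult, (Rabs_left (x - b)) by lra; nra.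
Qed.

Lemma value_bounds_of_slope (f x b L e : R) :
  x < b -> Rabs (f / (x - b) - L) < e -> (- L - e) * (b - x) < f < (- L + e) * (b - x).
Proof.
  intros Hx Hm.
  assert (Hf : f = f / (x - b) * (x - b)) by (field; lra).
  set (m := f / (x - b)) in *; apply Rabs_def2 in Hm; split; nra.
Qed.

Lemma tends_left_zero_of_slope (f : R -> R) (b L : R) :
  tends_left b (fun x => f x / (x - b)) L -> tends_left b f 0.
Proof.
  intros Hf eps Heps.
  set (K := Rabs L + 1).
  assert (HK : 0 < K) by (unfold K; pose proof (Rabs_pos L); lra).
  pose proof (near_left_and _ _ _ (Hf 1 ltac:(lra))
                (tends_left_linear b 1 (eps / K) ltac:(apply Rdiv_lt_0_compat; lra))) as Hboth.
  apply (near_left_impl _ _ _ Hboth); intros x Hx [Hm Hlin].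
  apply value_bounds_of_slope in Hm; [|exact Hx].
  rewrite Rminus_0_r, Rmult_1_l, Rabs_left in Hlin by lra.
  assert (Hdiv : eps / K * K = eps) by (field; lra).
  pose proof (Rle_abs L); pose proof (Rle_abs (- L)); rewrite Rabs_Ropp in *.
  rewrite Rminus_0_r; apply Rabs_def1; unfold K in *; nra.
Qed.

Lemma tends_left_div_zero (f g : R -> R) (b g1 : R) :
  g1 <> 0 -> tends_left b f 0 -> tends_left b g g1 -> tends_left b (fun x => f x / g x) 0.
Proof.
  intros Hg1 Hf Hg eps Heps.
  assert (Hm : 0 < Rabs g1 / 2) by (pose proof (Rabs_pos_lt g1 Hg1); lra).
  pose proof (near_left_and _ _ _ (Hf (eps * (Rabs g1 / 2)) ltac:(nra))
                (Hg (Rabs g1 / 2) Hm)) as Hboth.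
  apply (near_left_impl _ _ _ Hboth); intros x _ [Hfx Hgx].
  rewrite Rminus_0_r in *.
  assert (Hlow : Rabs g1 / 2 < Rabs (g x)).
  { pose proof (Rabs_triang_inv g1 (g1 - g x)).
    replace (g1 - (g1 - g x)) with (g x) in * by ring.
    rewrite <- Rabs_Ropp in Hgx; replace (- (g x - g1)) with (g1 - g x) in Hgx by ring; lra. }
  assert (Hgx0 : g x <> 0) by (intro E; rewrite E, Rabs_R0 in Hlow; lra).
  unfold Rdiv; rewrite Rabs_mult, Rabs_inv.
  apply (Rmult_lt_reg_r (Rabs (g x))); [lra|].
  rewrite Rmult_assoc, Rinv_l by (apply Rabs_no_R0, Hgx0); nra.
Qed.

Lemma tends_left_minus (f g : R -> R) (b L M : R) :
  tends_left b f L -> tends_left b g M -> tends_left b (fun x => f x - g x) (L - M).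
Proof.
  intros Hf Hg eps Heps.
  apply (near_left_impl _ _ _ (near_left_and _ _ _ (Hf (eps / 2) ltac:(lra)) (Hg (eps / 2) ltac:(lra)))).
  intros x _ [H1 H2]; apply Rabs_def2 in H1; apply Rabs_def2 in H2; apply Rabs_def1; lra.
Qed.

Lemma tends_left_nonpos (y : R -> R) (b y1 : R) :
  tends_left b y y1 -> near_left b (fun x => y x < 0) -> y1 <= 0.
Proof.
  intros Hy Hneg; destruct (Rle_or_lt y1 0) as [Hle | Hpos]; [exact Hle | exfalso].
  destruct (near_left_and _ _ _ (Hy y1 Hpos) Hneg) as [eta [Heta Hnear]].
  destruct (Hnear (b - eta / 2) ltac:(lra)) as [Hclose Hyneg].
  apply Rabs_def2 in Hclose; lra.
Qed.

Section Barrier.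
Variables (G dG : R -> R) (a b : R).
Hypothesis G_deriv : forall x, a < x < b -> is_derive G x (dG x).
Hypothesis G_pushes_up : forall x, a < x < b -> 0 < G x -> 0 < dG x.

Lemma G_continuous (x : R) : a < x < b -> continuity_pt G x.
Proof.
  intros Hx; apply continuity_pt_filterlim.
  apply (@ex_derive_continuous R_AbsRing R_NormedModule).
  eexists; now apply G_deriv.
Qed.

(* Once positive, G never drops below that value further right: at a maximum
   point M of G on [x0, t] we have G > 0 near M, so G strictly increases
   right after M by the mean value theorem. *)
Lemma positive_value_persists (x0 t : R) :
  a < x0 -> x0 < t < b -> 0 < G x0 -> G x0 <= G t.
Proof.
  intros Hax0 Ht Hpos.
  destruct (Rle_or_lt (G x0) (G t)) as [Hle | Hdrop]; [exact Hle | exfalso].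
  destruct (continuity_ab_maj G x0 t) as [M [HMmax HM]]; [lra | intros y Hy; apply G_continuous; lra |].
  assert (HGM : G x0 <= G M) by (apply HMmax; lra).
  assert (HMt : M < t) by (destruct (Req_dec M t); subst; lra).
  assert (HcM := G_continuous M ltac:(lra)); apply continuity_pt_filterlim in HcM.
  destruct (proj1 (filterlim_locally G (G M)) HcM (mkposreal (G M) ltac:(lra))) as [d Hd].
  pose proof (cond_pos d) as Hdpos.
  pose proof (Rmin_l t (M + d / 2)); pose proof (Rmin_r t (M + d / 2)).
  set (s := Rmin t (M + d / 2)) in *.
  assert (HMs : M < s) by (apply Rmin_glb_lt; lra).
  (* On (M, s) the function stays positive, hence increases strictly: G s > G M. *)
  assert (Hpos_near : forall y, M <= y <= s -> 0 < G y).
  { intros y Hy; assert (Hball : ball M d y) by (change (Rabs (y - M) < d); rewrite Rabs_right; lra).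
    specialize (Hd y Hball); change (Rabs (G y - G M) < G M) in Hd; apply Rabs_def2 in Hd; lra. }
  destruct (MVT_gen G M s dG) as [y [Hy Hmvt]].
  - intros y Hy; rewrite Rmin_left, Rmax_right in Hy by lra; apply G_deriv; lra.
  - intros y Hy; rewrite Rmin_left, Rmax_right in Hy by lra; apply G_continuous; lra.
  - rewrite Rmin_left, Rmax_right in Hy by lra.
    assert (0 < dG y) by (apply G_pushes_up, Hpos_near; lra).
    assert (G s <= G M) by (apply HMmax; lra); nra.
Qed.

Lemma barrier_nonpos :
  (forall eps, 0 < eps -> near_left b (fun x => G x < eps)) ->
  forall x, a < x < b -> G x <= 0.
Proof.
  intros Hsmall x0 Hx0.
  destruct (Rle_or_lt (G x0) 0) as [Hle | Hpos]; [exact Hle | exfalso].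
  destruct (Hsmall (G x0) Hpos) as [eta [Heta Hlow]].
  set (t := (Rmax x0 (b - eta) + b) / 2).
  pose proof (Rmax_l x0 (b - eta)); pose proof (Rmax_r x0 (b - eta)).
  assert (Rmax x0 (b - eta) < b) by (apply Rmax_lub_lt; lra).
  assert (G t < G x0) by (apply Hlow; unfold t; lra).
  assert (G x0 <= G t) by (apply positive_value_persists; unfold t; lra).
  lra.
Qed.

End Barrier.

Lemma is_derive_offset (y : R -> R) (x dy yb A b s : R) :
  is_derive y x dy ->
  is_derive (fun t => s * ((y t - yb) - A * (t - b))) x (s * (dy - A)).
Proof.
  intros Hy.
  assert (Hex : ex_derive y x) by (exists dy; exact Hy).
  auto_derive; [exact Hex |].
  replace (Derive (fun t : R => y t) x) with dy by (symmetry; now apply is_derive_unique).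
  ring.
Qed.

Lemma tends_left_offset (y : R -> R) (b yb A : R) :
  tends_left b y yb -> tends_left b (fun x => (y x - yb) - A * (x - b)) 0.
Proof.
  intros Hy eps Heps.
  pose proof (near_left_and _ _ _ (Hy (eps / 2) ltac:(lra))
                (tends_left_linear b A (eps / 2) ltac:(lra))) as Hboth.
  apply (near_left_impl _ _ _ Hboth); intros x _ [H1 H2].
  rewrite Rminus_0_r in H2 |- *.
  pose proof (Rabs_triang (y x - yb) (- (A * (x - b)))); rewrite Rabs_Ropp in *.
  replace (y x - yb - A * (x - b)) with (y x - yb + - (A * (x - b))) by ring; lra.
Qed.

Lemma line_barrier (y dy : R -> R) (a b yb A s : R) :
  a < b -> s = 1 \/ s = -1 ->
  (forall x, a < x < b -> is_derive y x (dy x)) ->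
  tends_left b y yb ->
  (forall x, a < x < b -> 0 < s * ((y x - yb) - A * (x - b)) -> 0 < s * (dy x - A)) ->
  forall x, a < x < b -> s * ((y x - yb) - A * (x - b)) <= 0.
Proof.
  intros Hab Hs Hder Hy Hpush.
  apply (barrier_nonpos _ (fun x => s * (dy x - A)) a b); [|exact Hpush|].
  - intros x Hx; apply is_derive_offset, Hder, Hx.
  - intros eps Heps.
    apply (near_left_impl _ _ _ (tends_left_offset y b yb A Hy eps Heps)).
    intros x _ Hx; rewrite Rminus_0_r in Hx; apply Rabs_def2 in Hx.
    destruct Hs; subst s; lra.
Qed.

Lemma slope_within (u x b L d : R) :
  x < b -> (L + d) * (x - b) <= u <= (L - d) * (x - b) -> Rabs (u / (x - b) - L) <= d.
Proof.
  intros Hx Hu.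
  assert (Hw : u = u / (x - b) * (x - b)) by (field; lra).
  set (w := u / (x - b)) in *.
  apply Rabs_le; split; nra.
Qed.

Lemma slope_limit_by_barriers (y dy : R -> R) (b yb L : R) :
  near_left b (fun x => is_derive y x (dy x)) ->
  tends_left b y yb ->
  (forall d, 0 < d -> near_left b (fun x =>
      (y x - yb < (L + d) * (x - b) -> dy x < L + d) /\
      ((L - d) * (x - b) < y x - yb -> L - d < dy x))) ->
  filterlim (fun x => (y x - yb) / (x - b)) (at_left b) (locally L).
Proof.
  intros Hder Hy Hbar; apply filterlim_of_tends_left; intros eps Heps.
  set (d := eps / 2).
  destruct (near_left_and _ _ _ Hder (Hbar d ltac:(unfold d; lra))) as [eta [Heta Hnear]].
  exists eta; split; [exact Heta|]; intros x Hx.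
  assert (Hab : b - eta < b) by lra.
  assert (Hd : forall t, b - eta < t < b -> is_derive y t (dy t)) by (intros; now apply Hnear).
  pose proof (line_barrier y dy _ _ yb (L - d) 1 Hab (or_introl eq_refl) Hd Hy
                ltac:(intros t Ht Hup; pose proof (proj2 (proj2 (Hnear t Ht))); lra) x Hx).
  pose proof (line_barrier y dy _ _ yb (L + d) (-1) Hab (or_intror eq_refl) Hd Hy
                ltac:(intros t Ht Hlow; pose proof (proj1 (proj2 (Hnear t Ht))); lra) x Hx).
  assert (Rabs ((y x - yb) / (x - b) - L) <= d) by (apply slope_within; lra).
  unfold d in *; lra.
Qed.

Lemma slope_limit_of_derivative_limit (y dy : R -> R) (b yb L : R) :
  near_left b (fun x => is_derive y x (dy x)) -> tends_left b y yb -> tends_left b dy L ->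
  filterlim (fun x => (y x - yb) / (x - b)) (at_left b) (locally L).
Proof.
  intros Hder Hy Hdy; apply (slope_limit_by_barriers y dy); [exact Hder | exact Hy |].
  intros d Hd; apply (near_left_impl _ _ _ (Hdy d Hd)).
  intros x _ Hx; apply Rabs_def2 in Hx; split; intros; lra.
Qed.

(* Slope field a + q/s along s = D (1 - x): if q ~ -dq (1 - x), a ~ a0 and
   D^2 - a0 D + dq has a positive margin, the field is below D above the line. *)
Lemma riccati_upper_step (a a0 q s x D e dq : R) :
  x < 1 -> 0 < D -> 0 <= q -> D * (1 - x) < s ->
  e * (D + 1) < D * D - a0 * D + dq ->
  a < a0 + e -> q < (- dq + e) * (1 - x) -> a + q / s < D.
Proof.
  intros Hx HD Hq Hs Hmargin Ha Hqx.
  assert (Hspos : 0 < s) by nra.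
  assert (Hr : q = q / s * s) by (field; lra).
  set (r := q / s) in *.
  assert (Hrpos : 0 <= r) by nra.
  assert (HrD : r * D < - dq + e) by nra.
  nra.
Qed.

Lemma riccati_lower_step (a a0 q s x E e dq : R) :
  x < 1 -> 0 < E -> 0 <= q -> 0 < s -> s < E * (1 - x) ->
  E * E - a0 * E + dq < - e * (E + 1) ->
  a0 - e < a -> (- dq - e) * (1 - x) < q -> E < a + q / s.
Proof.
  intros Hx HE Hq Hspos Hs Hmargin Ha Hqx.
  assert (Hr : q = q / s * s) by (field; lra).
  set (r := q / s) in *.
  assert (Hrpos : 0 <= r) by nra.
  assert (HrE : - dq - e < r * E) by nra.
  nra.
Qed.

(* The larger root of l^2 - a0 l + dq = 0: the slope of z at a zero endpoint. *)
Definition riccati_slope (a0 dq : R) : R := (a0 + sqrt (a0 ^ 2 - 4 * dq)) / 2.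

Lemma riccati_slope_root (a0 dq : R) : dq <= 0 ->
  let l := riccati_slope a0 dq in l * l - a0 * l + dq = 0 /\ 0 <= l /\ a0 <= l.
Proof.
  intros Hdq l.
  assert (Hsq := sqrt_sqrt (a0 ^ 2 - 4 * dq) ltac:(nra)).
  assert (Hs0 := sqrt_pos (a0 ^ 2 - 4 * dq)).
  set (s0 := sqrt (a0 ^ 2 - 4 * dq)) in *.
  assert (Habs : a0 <= s0 /\ - a0 <= s0) by (split; nra).
  unfold l, riccati_slope; fold s0; repeat split; nra.
Qed.

Lemma riccati_slope_flat (a0 : R) : riccati_slope a0 0 = Rmax 0 a0.
Proof.
  unfold riccati_slope; replace (a0 ^ 2 - 4 * 0) with (Rsqr a0) by (unfold Rsqr; ring).
  rewrite sqrt_Rsqr_abs; unfold Rmax, Rabs.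
  destruct (Rle_dec 0 a0); destruct (Rcase_abs a0); lra.
Qed.

Section RiccatiEndpoint.
Variables (y a q : R -> R) (y1 a0 dq : R).
Hypothesis y_deriv : near_left 1 (fun x => is_derive y x (a x - q x / y x)).
Hypothesis y_neg : near_left 1 (fun x => y x < 0).
Hypothesis q_nonneg : near_left 1 (fun x => 0 <= q x).
Hypothesis y_tends : tends_left 1 y y1.
Hypothesis a_tends : tends_left 1 a a0.
Hypothesis q_slope : tends_left 1 (fun x => q x / (x - 1)) dq.

Lemma riccati_slope_negative_end :
  y1 < 0 -> filterlim (fun x => (y x - y1) / (x - 1)) (at_left 1) (locally a0).
Proof.
  intros Hy1; apply (slope_limit_of_derivative_limit y (fun x => a x - q x / y x));
    [exact y_deriv | exact y_tends |].
  replace a0 with (a0 - 0) by ring; apply tends_left_minus; [exact a_tends|].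
  apply (tends_left_div_zero _ _ _ y1); [lra | | exact y_tends].
  exact (tends_left_zero_of_slope q 1 dq q_slope).
Qed.

Lemma riccati_flux_positive (x : R) : y x < 0 -> a x - q x / y x = a x + q x / - y x.
Proof. intros Hyx; field; lra. Qed.

Lemma riccati_upper_barrier (d : R) :
  y1 = 0 -> dq <= 0 -> 0 < d ->
  near_left 1 (fun x => y x - y1 < (riccati_slope a0 dq + d) * (x - 1) ->
                        a x - q x / y x < riccati_slope a0 dq + d).
Proof.
  intros Hy1 Hdq Hd; subst y1.
  destruct (riccati_slope_root a0 dq Hdq) as [Hroot [Hl0 Ha0l]].
  set (l := riccati_slope a0 dq) in *; set (D := l + d).
  set (e := (D * D - a0 * D + dq) / (2 * (D + 1))).
  assert (Hmargin : 0 < D * D - a0 * D + dq) by (unfold D; nra).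
  assert (He : e * (D + 1) = (D * D - a0 * D + dq) / 2) by (unfold e, D; field; lra).
  assert (Hepos : 0 < e) by (unfold e; apply Rdiv_lt_0_compat; unfold D in *; lra).
  pose proof (near_left_and _ _ _ (near_left_and _ _ _ y_neg q_nonneg)
                (near_left_and _ _ _ (a_tends e Hepos) (q_slope e Hepos))) as Hnear.
  apply (near_left_impl _ _ _ Hnear); intros x Hx [[Hyx Hqx] [Hax Hqs]] Hbelow.
  apply value_bounds_of_slope in Hqs; [|exact Hx]; apply Rabs_def2 in Hax.
  rewrite riccati_flux_positive by exact Hyx.
  apply (riccati_upper_step _ a0 _ _ x D e dq); unfold D in *; lra.
Qed.

Lemma riccati_lower_barrier (d : R) :
  y1 = 0 -> dq <= 0 -> 0 < d ->
  near_left 1 (fun x => (riccati_slope a0 dq - d) * (x - 1) < y x - y1 ->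
                        riccati_slope a0 dq - d < a x - q x / y x).
Proof.
  intros Hy1 Hdq Hd; subst y1.
  destruct (riccati_slope_root a0 dq Hdq) as [Hroot [Hl0 Ha0l]].
  set (l := riccati_slope a0 dq) in *; set (E := l - d).
  destruct (Rle_or_lt E 0) as [HE | HE].
  - (* The line lies above 0 > y, so the hypothesis of the barrier never holds. *)
    apply (near_left_impl _ _ _ y_neg); intros x Hx Hyx Habove; unfold E in *; nra.
  - set (e := - (E * E - a0 * E + dq) / (2 * (E + 1))).
    assert (Hmargin : 0 < - (E * E - a0 * E + dq)) by (unfold E in *; nra).
    assert (He : e * (E + 1) = - (E * E - a0 * E + dq) / 2) by (unfold e; field; lra).
    assert (Hepos : 0 < e) by (unfold e; apply Rdiv_lt_0_compat; lra).
    pose proof (near_left_and _ _ _ (near_left_and _ _ _ y_neg q_nonneg)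
                  (near_left_and _ _ _ (a_tends e Hepos) (q_slope e Hepos))) as Hnear.
    apply (near_left_impl _ _ _ Hnear); intros x Hx [[Hyx Hqx] [Hax Hqs]] Habove.
    apply value_bounds_of_slope in Hqs; [|exact Hx]; apply Rabs_def2 in Hax.
    rewrite riccati_flux_positive by exact Hyx.
    apply (riccati_lower_step _ a0 _ _ x E e dq); unfold E in *; lra.
Qed.

Lemma riccati_slope_zero_end :
  y1 = 0 -> dq <= 0 ->
  filterlim (fun x => (y x - y1) / (x - 1)) (at_left 1) (locally (riccati_slope a0 dq)).
Proof.
  intros Hy1 Hdq; apply (slope_limit_by_barriers y (fun x => a x - q x / y x));
    [exact y_deriv | exact y_tends |].
  intros d Hd; apply near_left_and;
    [apply riccati_upper_barrier | apply riccati_lower_barrier]; assumption.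
Qed.

End RiccatiEndpoint.

Lemma solution_near_one (h q : R -> R) (c : R) (z : R -> R) :
  solP h q c z -> (forall x, 0 < x < 1 -> 0 < q x) ->
  near_left 1 (fun x => is_derive z x (h x - c - q x / z x)) /\
  near_left 1 (fun x => z x < 0) /\ near_left 1 (fun x => 0 <= q x) /\
  tends_left 1 z (z 1).
Proof.
  intros [Hcont [Hder [Hneg _]]] Hqpos.
  assert (Hin : near_left 1 (fun x => 0 < x < 1)) by (exists 1; split; intros; lra).
  repeat split; try (apply (near_left_impl _ _ _ Hin); intros x _ Hx).
  - now apply Hder.
  - now apply Hneg.
  - now apply Rlt_le, Hqpos.
  - now apply tends_left_of_cont01.
Qed.

Theorem proposition7p1 (f h q : R -> R) (dq cstar c : R) (z : R -> R) :
  C1_01 f h -> f 0 = 0 ->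
  cond_q q ->
  filterlim (fun x => (q x - q 1) / (x - 1)) (at_left 1) (locally dq) ->
  dq <= 0 ->
  (forall c', (exists w, solP h q c' w /\ w 1 = 0) <-> cstar <= c') ->
  cstar <= c ->
  solP h q c z ->
  exists dz,
    filterlim (fun x => (z x - z 1) / (x - 1)) (at_left 1) (locally dz) /\
    (z 1 < 0 -> dz = h 1 - c) /\
    (z 1 = 0 ->
       (dq < 0 -> dz = / 2 * (h 1 - c + sqrt ((h 1 - c) ^ 2 - 4 * dq))) /\
       (dq = 0 -> dz = Rmax 0 (h 1 - c))).
Proof.
  intros [_ [_ [_ Hh]]] _ [_ [Hqpos [_ [Hq1 _]]]] Hdq Hdq0 _ _ Hz.
  destruct (solution_near_one h q c z Hz Hqpos) as [Hder [Hneg [Hqnn Hzlim]]].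
  assert (Ha : tends_left 1 (fun x => h x - c) (h 1 - c)).
  { intros eps Heps; apply (near_left_impl _ _ _ (tends_left_of_cont01 h Hh eps Heps)).
    intros x _; now replace (h x - c - (h 1 - c)) with (h x - h 1) by ring. }
  assert (Hqs : tends_left 1 (fun x => q x / (x - 1)) dq).
  { intros eps Heps; apply (near_left_impl _ _ _ (tends_left_of_filterlim _ _ _ Hdq eps Heps)).
    intros x _; now rewrite Hq1, Rminus_0_r. }
  destruct (Rle_lt_or_eq_dec _ _ (tends_left_nonpos z 1 (z 1) Hzlim Hneg)) as [Hz1 | Hz1].
  - exists (h 1 - c); split; [|split; [reflexivity | intros; lra]].
    exact (riccati_slope_negative_end z _ q (z 1) _ dq Hder Hzlim Ha Hqs Hz1).
  - exists (riccati_slope (h 1 - c) dq); split; [|split; [intros; lra | intros _; split]].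
    + exact (riccati_slope_zero_end z _ q (z 1) _ dq Hder Hneg Hqnn Hzlim Ha Hqs Hz1 Hdq0).
    + intros _; unfold riccati_slope; lra.
    + intros Hflat; subst dq; apply riccati_slope_flat.
Qed.
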